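(* Let $\alpha\in(0,1)$, $0<\varepsilon\le1/4$, a spending sequence $(\varepsilon_t)_{t\ge0}$ and the stopping boundaries $U_t,L_t$ be as in the context, and suppose there exist $\lambda>0$, $q>0$, $T\in\mathbb{N}$ with $\varepsilon_t-\varepsilon_{t-1}\ge\lambda t^{-q}$ for all $t\ge T$. Let $p$ be a $[0,1]$-valued random variable with CDF $F$ that is H\''older continuous with exponent $\xi>0$ in a neighborhood of $\alpha$ (there exist an open interval $V\ni\alpha$ and $c>0$ with $|F(x)-F(y)|\le c|x-y|^\xi$ for $x,y\in V$). Conditionally on $p$, let $X_1,X_2,\dots$ be i.i.d. Bernoulli$(p)$, $S_t=\sum_{j=1}^tX_j$, and $\tau=\inf\{t\in\mathbb{N}:S_t\ge U_t\text{ or }S_t\le L_t\}$. Then for any $\eta\in(0,1)$ there exist constants $\kappa$ and $\tilde T$ such that $\mathbb{P}(\tau>t)\le 2e^{-2t^\eta}+\kappa t^{\xi(\eta-1)/2}$ for all $t\ge\tilde T$. Hence $\mathbb{P}(\tau>t)=o(t^d)$ as $t\to\infty$ for any $d>-\xi/2$.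
   Context: $\mathbb{N}=\{1,2,\dots\}$. A spending sequence is a sequence $(\varepsilon_t)_{t\ge0}$ of reals with $0\le\varepsilon_0\le\varepsilon_1\le\cdots$ and $\varepsilon_t\to\varepsilon$. For $r\in[0,1]$, $\mathbb{P}_r$ denotes a probability under which $X_1,X_2,\dots$ are i.i.d. Bernoulli$(r)$, $S_t=\sum_{j=1}^tX_j$. The stopping boundaries are defined recursively: with $\tau=\inf\{t\in\mathbb{N}:S_t\ge U_t\text{ or }S_t\le L_t\}$ ($\inf\emptyset=\infty$; the events $\{\tau\ge t\}$, $\{\tau<t,S_\tau\ge U_\tau\}$, $\{\tau<t,S_\tau\le L_\tau\}$ only involve $U_s,L_s$, $s<t$), $U_t=\min\{j\in\mathbb{N}:\mathbb{P}_\alpha(\tau\ge t,S_t\ge j)+\mathbb{P}_\alpha(\tau<t,S_\tau\ge U_\tau)\le\varepsilon_t\}$ and $L_t=\max\{j\in\mathbb{Z}:\mathbb{P}_\alpha(\tau\ge t,S_t\le j)+\mathbb{P}_\alpha(\tau<t,S_\tau\le L_\tau)\le\varepsilon_t\}$. *)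

From HB Require Import structures.
From mathcomp Require Import all_boot all_order all_algebra.
From mathcomp Require Import all_classical all_reals all_analysis.
Set Implicit Arguments. Unset Strict Implicit. Unset Printing Implicit Defensive.
Import Order.TTheory GRing.Theory Num.Theory.
Local Open Scope ring_scope.

(* Bernoulli paths of length t are tuples s : t.-tuple bool; X_j = s_(j-1). *)

Definition Ssum (s : seq bool) (k : nat) : int := (count id (take k s))%:Z.

Section Boundaries.
Variables (U L : nat -> int).

Definition stop_at (s : seq bool) (k : nat) : bool :=
  (U k <= Ssum s k) || (Ssum s k <= L k).

(** no stopping at any time 1..n, i.e. tau > n *)
Definition nostop_upto (s : seq bool) (n : nat) : bool :=
  all (fun k => ~~ stop_at s k) (iota 1 n).

(** tau < t and S_tau >= U_tau *)
Definition up_before (s : seq bool) (t : nat) : bool :=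
  has (fun k => nostop_upto s k.-1 && (U k <= Ssum s k)) (iota 1 t.-1).

(** tau < t and S_tau <= L_tau *)
Definition down_before (s : seq bool) (t : nat) : bool :=
  has (fun k => nostop_upto s k.-1 && (Ssum s k <= L k)) (iota 1 t.-1).
End Boundaries.

Definition Pber {R : realType} (r : R) (t : nat) (A : pred (t.-tuple bool)) : R :=
  \sum_(s : t.-tuple bool | A s) \prod_(x <- s) (if x then r else 1 - r).

Definition condU {R : realType} (a : R) (eps : nat -> R) (U L : nat -> int)
  (t : nat) (j : int) : Prop :=
  Pber a (fun s : t.-tuple bool => nostop_upto U L s t.-1 && (j <= Ssum s t))
  + Pber a (fun s : t.-tuple bool => up_before U L s t) <= eps t.

Definition condL {R : realType} (a : R) (eps : nat -> R) (U L : nat -> int)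
  (t : nat) (j : int) : Prop :=
  Pber a (fun s : t.-tuple bool => nostop_upto U L s t.-1 && (Ssum s t <= j))
  + Pber a (fun s : t.-tuple bool => down_before U L s t) <= eps t.

(** U, L are the stopping boundaries (for t in N = {1,2,...}):
    U_t = min {j in N : condU t j},  L_t = max {j in Z : condL t j}.
    (condU t / condL t only depend on U_s, L_s for s < t.) *)
Definition is_boundaries {R : realType} (a : R) (eps : nat -> R)
  (U L : nat -> int) : Prop :=
  forall t : nat, (0 < t)%N ->
    [/\ 1 <= U t, condU a eps U L t (U t),
        (forall j : int, 1 <= j -> condU a eps U L t j -> U t <= j),
        condL a eps U L t (L t) &
        (forall j : int, condL a eps U L t j -> j <= L t)].

Definition tail_given {R : realType} (U L : nat -> int) (t : nat) (r : R) : R :=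
  Pber r (fun s : t.-tuple bool => nostop_upto U L s t).

(** P(tau > t) when, conditionally on p ~ mu, X_j are i.i.d. Bernoulli(p):
    E[ P_p(tau > t) ] *)
Definition tail_prob {R : realType} (mu : probability R R) (U L : nat -> int)
  (t : nat) : R :=
  fine (\int[mu]_(r in setT) (tail_given U L t r)%:E)%E.

Definition cdf_of {R : realType} (mu : probability R R) (x : R) : R :=
  fine (mu `]-oo, x]%classic).

(* Under P_r, a Chernoff bound gives P_r(S_t >= r t + x) and P_r(S_t <= r t - x)
   at most exp(-x^2/8t). For x = t^((1+eta)/2) this is exp(-t^eta/8), eventually below
   the spending increment eps_t - eps_(t-1) >= lam t^-q. Since the mass of paths that
   crossed a boundary before t is at most eps_(t-1), the level alpha t + x (resp.
   alpha t - x) is then admissible for U_t (resp. L_t), so a path not stopped at t has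
   |S_t - alpha t| < x. For |p - alpha| >= 2x/t this band is a deviation of x from p t,
   so P_p(tau > t) <= exp(-t^eta/8); the remaining p lie in an interval of length
   4x/t = 4 t^((eta-1)/2), of mass at most c (4x/t)^xi by the Hoelder continuity of
   the CDF. *)

From HB Require Import structures.
From mathcomp Require Import all_boot all_order all_algebra.
From mathcomp Require Import all_classical all_reals all_analysis.
From mathcomp Require Import measurable_realfun.
From mathcomp Require Import ring lra zify.
Import Order.TTheory GRing.Theory Num.Theory.
Import numFieldNormedType.Exports.
Local Open Scope ring_scope.

Section BernoulliPaths.
Context {R : realType}.
Implicit Types r : R.

Definition path_prob r (s : seq bool) : R := \prod_(x <- s) (if x then r else 1 - r).

Lemma path_prob_ge0 r (s : seq bool) : 0 <= r <= 1 -> 0 <= path_prob r s.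
Proof. by move=> /andP[r0 r1]; apply: prodr_ge0 => -[] _ //; lra. Qed.

Lemma big_tuple0 (F : 0.-tuple bool -> R) : \sum_(s : 0.-tuple bool) F s = F [tuple].
Proof. by rewrite (big_pred1 [tuple]) // => s /=; apply/esym/eqP; exact: tuple0. Qed.

Lemma big_tuple_rcons n (F : n.+1.-tuple bool -> R) :
  \sum_(s : n.+1.-tuple bool) F s =
  \sum_(s : n.-tuple bool) \sum_(b : bool) F [tuple of rcons s b].
Proof.
rewrite pair_bigA /=.
pose h (p : n.-tuple bool * bool) := [tuple of rcons p.1 p.2].
pose h' (s : n.+1.-tuple bool) :=
  ([tuple of belast (thead s) (behead s)], last (thead s) (behead s)).
have hh' : cancel h' h.
  by move=> s; apply: val_inj => /=; rewrite -lastI [in RHS](tuple_eta s).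
have h'h : cancel h h'.
  move=> [s b]; apply/eqP; rewrite xpair_eqE.
  have E : rcons (belast (thead (h (s, b))) (behead (h (s, b))))
              (last (thead (h (s, b))) (behead (h (s, b)))) = rcons s b.
    by rewrite -lastI -[RHS]/(val (h (s, b))) [in RHS](tuple_eta (h (s, b))).
  by case/rcons_inj: E => E1 E2; rewrite -val_eqE /= E1 E2 !eqxx.
rewrite (reindex h) //=.
by exists h' => x _; [apply: h'h | apply: hh'].
Qed.

Lemma sum_tuple_prod n (f : bool -> R) :
  \sum_(s : n.-tuple bool) \prod_(x <- s) f x = (f true + f false) ^+ n.
Proof.
elim: n => [|n IH]; first by rewrite big_tuple0 big_nil expr0.
rewrite big_tuple_rcons exprSr -IH mulr_suml; apply: eq_bigr => s _.
by rewrite big_bool /= -!cats1 !big_cat !big_seq1 /=; ring.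
Qed.

Lemma PberE r t (A : pred (t.-tuple bool)) :
  Pber r A = \sum_(s : t.-tuple bool) (if A s then path_prob r s else 0).
Proof. by rewrite /Pber big_mkcond. Qed.

Lemma eq_Pber r t (A B : pred (t.-tuple bool)) : A =1 B -> Pber r A = Pber r B.
Proof. by move=> AB; apply: eq_bigl. Qed.

Lemma Pber_pred0 r t : Pber r (fun _ : t.-tuple bool => false) = 0.
Proof. by rewrite /Pber big_pred0. Qed.

Lemma Pber_predT r t : Pber r (fun _ : t.-tuple bool => true) = 1.
Proof. by rewrite /Pber sum_tuple_prod /= addrC subrK expr1n. Qed.

Lemma Pber_take r n (E : pred (seq bool)) :
  Pber r (fun s : n.+1.-tuple bool => E (take n s)) = Pber r (fun s : n.-tuple bool => E s).
Proof.
rewrite !PberE big_tuple_rcons; apply: eq_bigr => s _.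
have take_rcons b : take n (rcons s b) = s.
  by rewrite -cats1 take_size_cat ?size_tuple.
rewrite big_bool /= !take_rcons /path_prob -!cats1 !big_cat !big_seq1 /=.
by case: (E s) => //; rewrite ?addr0; ring.
Qed.

Section Monotone.
Variable r : R.
Hypothesis r01 : 0 <= r <= 1.

Lemma Pber_ge0 t (A : pred (t.-tuple bool)) : 0 <= Pber r A.
Proof. by apply: sumr_ge0 => s _; exact: path_prob_ge0. Qed.

Lemma le_Pber t (A B : pred (t.-tuple bool)) :
  (forall s, A s -> B s) -> Pber r A <= Pber r B.
Proof.
move=> AB; rewrite !PberE; apply: ler_sum => s _.
case As: (A s); first by rewrite (AB _ As).
by case: (B s) => //; exact: path_prob_ge0.
Qed.

Lemma Pber_le1 t (A : pred (t.-tuple bool)) : Pber r A <= 1.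
Proof. by rewrite -(Pber_predT r t); apply: le_Pber. Qed.

Lemma Pber_orb t (A B : pred (t.-tuple bool)) :
  Pber r (fun s => A s || B s) <= Pber r A + Pber r B.
Proof.
rewrite !PberE -big_split /=; apply: ler_sum => s _.
have := @path_prob_ge0 r s r01.
by case: (A s); case: (B s) => /= h; lra.
Qed.

End Monotone.

Lemma measurable_Pber t (A : pred (t.-tuple bool)) :
  measurable_fun setT (fun r : R => Pber r A).
Proof.
under eq_fun do rewrite PberE.
apply: measurable_sum => s; case: (A s); last exact: measurable_cst.
apply: measurable_prod => -[] _; first exact: measurable_id.
by apply: measurable_funB; [exact: measurable_cst | exact: measurable_id].
Qed.

End BernoulliPaths.

Section Chernoff.
Context {R : realType}.

Lemma expR_le_quadratic (l : R) : -(1/2) <= l <= 1/2 -> expR l <= 1 + l + 2 * l ^+ 2.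
Proof.
move=> /andP[l1 l2].
have eNl := expR_ge1Dx (- l).
have el : expR l * expR (- l) = 1 by rewrite -expRD subrr expR0.
have e0 := expR_gt0 l.
have le1 : expR l * (1 - l) <= 1 by rewrite -el ler_wpM2l ?(ltW e0) //; lra.
have : 1 <= (1 + l + 2 * l ^+ 2) * (1 - l).
  have : 0 <= l ^+ 2 * (1 - 2 * l) by apply: mulr_ge0; [exact: sqr_ge0 | lra].
  nra.
nra.
Qed.

Lemma Ssum_tuple t (s : t.-tuple bool) : Ssum s t = (count id s)%:Z.
Proof. by rewrite /Ssum take_oversize ?size_tuple. Qed.

Lemma path_prob_expR (r l : R) (s : seq bool) :
  path_prob r s * expR (l * (count id s)%:R) =
  \prod_(x <- s) (if x then r * expR l else 1 - r).
Proof.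
elim: s => [|[] s IH]; first by rewrite /path_prob !big_nil mulr0 expR0 mulr1.
  by rewrite /path_prob !big_cons -IH /path_prob /= -add1n natrD mulrDr mulr1 expRD; ring.
by rewrite /path_prob !big_cons -IH /path_prob /= add0n; ring.
Qed.

Lemma sum_path_prob_expR (r l : R) t :
  \sum_(s : t.-tuple bool) path_prob r s * expR (l * (count id s)%:R) =
  (1 - r + r * expR l) ^+ t.
Proof. by under eq_bigr do rewrite path_prob_expR; rewrite sum_tuple_prod addrC. Qed.

Lemma mgf_le_expR (r l : R) t : 0 <= r <= 1 -> -(1/2) <= l <= 1/2 ->
  (1 - r + r * expR l) ^+ t <= expR (t%:R * (r * l + 2 * l ^+ 2)).
Proof.
move=> /andP[r0 r1] hl.
rewrite expRM_natl; apply: lerXn2r.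
- by rewrite nnegrE; have := expR_gt0 l; nra.
- by rewrite nnegrE; exact: ltW (expR_gt0 _).
have := expR_le_quadratic l hl; have := expR_ge1Dx (r * l + 2 * l ^+ 2).
have : 0 <= l ^+ 2 by exact: sqr_ge0.
nra.
Qed.

Lemma Pber_chernoff (r l c : R) t (A : pred (t.-tuple bool)) :
  0 <= r <= 1 -> -(1/2) <= l <= 1/2 ->
  (forall s, A s -> 0 <= l * ((count id s)%:R - c)) ->
  Pber r A <= expR (- (l * c) + t%:R * (r * l + 2 * l ^+ 2)).
Proof.
move=> r01 hl hA.
apply: le_trans (_ : \sum_(s : t.-tuple bool)
  path_prob r s * expR (l * ((count id s)%:R - c)) <= _).
  rewrite PberE; apply: ler_sum => s _.
  have w0 := path_prob_ge0 r s r01.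
  case As: (A s); last by apply: mulr_ge0 => //; exact: expR_ge0.
  have e1 : 1 <= expR (l * ((count id s)%:R - c)).
    by rewrite -[X in X <= _]expR0 ler_expR; apply: hA; rewrite As.
  by rewrite -{1}[path_prob r s]mulr1 ler_wpM2l.
under eq_bigr do rewrite mulrBr expRD mulrA.
rewrite -mulr_suml sum_path_prob_expR expRD mulrC.
by apply: ler_wpM2l; [exact: expR_ge0 | exact: mgf_le_expR].
Qed.

Lemma Pber_Ssum_ge {r x : R} {t : nat} : 0 <= r <= 1 -> (0 < t)%N -> 0 <= x <= 2 * t%:R ->
  Pber r (fun s : t.-tuple bool => r * t%:R + x <= (Ssum s t)%:~R)
  <= expR (- (x ^+ 2 / (8 * t%:R))).
Proof.
move=> r01 t0 /andP[x0 x1].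
have tp : (0 : R) < t%:R by rewrite ltr0n.
have l0 : 0 <= x / (4 * t%:R) by rewrite divr_ge0 //; lra.
have l1 : x / (4 * t%:R) <= 1/2 by rewrite ler_pdivrMr; lra.
apply: le_trans (@Pber_chernoff r (x / (4 * t%:R)) (r * t%:R + x) t _ r01 _ _) _.
- by apply/andP; split; lra.
- by move=> s; rewrite Ssum_tuple => h; apply: mulr_ge0 => //; lra.
by rewrite le_eqVlt; apply/orP; left; apply/eqP; congr expR; field; lra.
Qed.

Lemma Pber_Ssum_le {r x : R} {t : nat} : 0 <= r <= 1 -> (0 < t)%N -> 0 <= x <= 2 * t%:R ->
  Pber r (fun s : t.-tuple bool => (Ssum s t)%:~R <= r * t%:R - x)
  <= expR (- (x ^+ 2 / (8 * t%:R))).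
Proof.
move=> r01 t0 /andP[x0 x1].
have tp : (0 : R) < t%:R by rewrite ltr0n.
have l0 : 0 <= x / (4 * t%:R) by rewrite divr_ge0 //; lra.
have l1 : x / (4 * t%:R) <= 1/2 by rewrite ler_pdivrMr; lra.
apply: le_trans (@Pber_chernoff r (- (x / (4 * t%:R))) (r * t%:R - x) t _ r01 _ _) _.
- by apply/andP; split; lra.
- move=> s; rewrite Ssum_tuple => h; rewrite mulNr -mulrN.
  by apply: mulr_ge0 => //; lra.
by rewrite le_eqVlt; apply/orP; left; apply/eqP; congr expR; field; lra.
Qed.

End Chernoff.

Section StoppedPaths.
Variables (U L : nat -> int).

Lemma Ssum_take k u s : (k <= u)%N -> Ssum (take u s) k = Ssum s k.
Proof. by move=> ku; rewrite /Ssum take_takel. Qed.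

Lemma nostop_upto_take n u s :
  (n <= u)%N -> nostop_upto U L (take u s) n = nostop_upto U L s n.
Proof.
move=> nu; apply: eq_in_all => k; rewrite mem_iota => /andP[_ kn].
by rewrite /stop_at Ssum_take //; lia.
Qed.

Lemma up_before_take u s : up_before U L (take u s) u.+1 = up_before U L s u.+1.
Proof.
apply: eq_in_has => k; rewrite mem_iota => /andP[k1 kn] /=.
by rewrite nostop_upto_take ?Ssum_take //; lia.
Qed.

Lemma down_before_take u s :
  down_before U L (take u s) u.+1 = down_before U L s u.+1.
Proof.
apply: eq_in_has => k; rewrite mem_iota => /andP[k1 kn] /=.
by rewrite nostop_upto_take ?Ssum_take //; lia.
Qed.

Lemma iota1_rcons u : (0 < u)%N -> iota 1 u = rcons (iota 1 u.-1) u.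
Proof. by case: u => // u _; rewrite -cats1 -{1}[u.+1]addn1 iotaD add1n. Qed.

Lemma up_beforeS u s : (0 < u)%N ->
  up_before U L s u.+1 =
  up_before U L s u || nostop_upto U L s u.-1 && (U u <= Ssum s u).
Proof. by move=> u0; rewrite /up_before /= iota1_rcons // has_rcons orbC. Qed.

Lemma down_beforeS u s : (0 < u)%N ->
  down_before U L s u.+1 =
  down_before U L s u || nostop_upto U L s u.-1 && (Ssum s u <= L u).
Proof. by move=> u0; rewrite /down_before /= iota1_rcons // has_rcons orbC. Qed.

Lemma nostop_upto_stop_at s t : (0 < t)%N -> nostop_upto U L s t -> ~~ stop_at U L s t.
Proof. by move=> t0 /allP; apply; rewrite mem_iota; lia. Qed.

End StoppedPaths.

Section Boundaries.
Context {R : realType}.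
Variables (a : R) (eps : nat -> R) (U L : nat -> int).
Hypotheses (Hb : is_boundaries a eps U L) (a01 : 0 <= a <= 1) (eps0_ge0 : 0 <= eps 0%N).

(* Crossing U before time u+2 means crossing it before u+1 or exactly at u+1,
   and condU at time u+1 bounds the total by eps_(u+1). *)
Lemma Pber_up_before_le t : (0 < t)%N ->
  Pber a (fun s : t.-tuple bool => up_before U L s t) <= eps t.-1.
Proof.
case: t => // -[_|u _]; first by rewrite (@eq_Pber _ a 1 _ (fun _ => false)) ?Pber_pred0.
have [_ condUu _ _ _] := Hb u.+1 isT.
rewrite (@eq_Pber _ a _ _ (fun s => up_before U L (take u.+1 s) u.+2));
  last by move=> s; rewrite up_before_take.
rewrite (Pber_take a u.+1 (fun s => up_before U L s u.+2)) /=.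
rewrite (@eq_Pber _ a _ _ (fun s => up_before U L s u.+1 ||
  nostop_upto U L s u && (U u.+1 <= Ssum s u.+1)));
  last by move=> s; rewrite up_beforeS.
by apply: le_trans (Pber_orb _ a01 _ _ _) _; rewrite addrC.
Qed.

Lemma Pber_down_before_le t : (0 < t)%N ->
  Pber a (fun s : t.-tuple bool => down_before U L s t) <= eps t.-1.
Proof.
case: t => // -[_|u _]; first by rewrite (@eq_Pber _ a 1 _ (fun _ => false)) ?Pber_pred0.
have [_ _ _ condLu _] := Hb u.+1 isT.
rewrite (@eq_Pber _ a _ _ (fun s => down_before U L (take u.+1 s) u.+2));
  last by move=> s; rewrite down_before_take.
rewrite (Pber_take a u.+1 (fun s => down_before U L s u.+2)) /=.
rewrite (@eq_Pber _ a _ _ (fun s => down_before U L s u.+1 ||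
  nostop_upto U L s u && (Ssum s u.+1 <= L u.+1)));
  last by move=> s; rewrite down_beforeS.
by apply: le_trans (Pber_orb _ a01 _ _ _) _; rewrite addrC.
Qed.

(* If S_t >= x then j := S_t satisfies condU at time t (the fresh mass is at most
   the increment of eps, the mass crossed before t at most eps_(t-1)), so U_t <= S_t. *)
Lemma nostop_Ssum_lt t (x : R) (s : t.-tuple bool) : (0 < t)%N -> 1 <= x ->
  Pber a (fun s : t.-tuple bool => x <= (Ssum s t)%:~R) <= eps t - eps t.-1 ->
  nostop_upto U L s t -> (Ssum s t)%:~R < x.
Proof.
move=> t0 x1 hP hn; rewrite ltNge; apply/negP => hx.
have := nostop_upto_stop_at U L s t t0 hn; rewrite /stop_at negb_or => /andP[/negP hU _].
have [_ _ U_min _ _] := Hb t t0.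
apply/hU/U_min; first by rewrite -(ler_int R); apply: le_trans hx.
have hS : Pber a (fun s0 : t.-tuple bool =>
            nostop_upto U L s0 t.-1 && (Ssum s t <= Ssum s0 t))
          <= Pber a (fun s : t.-tuple bool => x <= (Ssum s t)%:~R).
  by apply: le_Pber => // s0 /andP[_ h]; apply: le_trans hx _; rewrite ler_int.
have := Pber_up_before_le t t0; rewrite /condU; lra.
Qed.

Lemma nostop_Ssum_gt t (x : R) (s : t.-tuple bool) : (0 < t)%N ->
  Pber a (fun s : t.-tuple bool => (Ssum s t)%:~R <= x) <= eps t - eps t.-1 ->
  nostop_upto U L s t -> x < (Ssum s t)%:~R.
Proof.
move=> t0 hP hn; rewrite ltNge; apply/negP => hx.
have := nostop_upto_stop_at U L s t t0 hn; rewrite /stop_at negb_or => /andP[_ /negP hL].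
have [_ _ _ _ L_max] := Hb t t0.
apply/hL/L_max.
have hS : Pber a (fun s0 : t.-tuple bool =>
            nostop_upto U L s0 t.-1 && (Ssum s0 t <= Ssum s t))
          <= Pber a (fun s : t.-tuple bool => (Ssum s t)%:~R <= x).
  by apply: le_Pber => // s0 /andP[_ h]; apply: le_trans _ hx; rewrite ler_int.
have := Pber_down_before_le t t0; rewrite /condL; lra.
Qed.

Section Deviation.
Variables (t : nat) (x : R).
Hypotheses (t_gt0 : (0 < t)%N) (x_range : 1 <= x <= t%:R).
Hypothesis chernoff_le_spent : expR (- (x ^+ 2 / (8 * t%:R))) <= eps t - eps t.-1.

Lemma nostop_Ssum_band (s : t.-tuple bool) : nostop_upto U L s t ->
  a * t%:R - x < (Ssum s t)%:~R < a * t%:R + x.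
Proof.
move=> hn; have tp : (0 : R) < t%:R by rewrite ltr0n.
have /andP[x1 xt] := x_range.
have x02 : 0 <= x <= 2 * t%:R by apply/andP; split; lra.
have at0 : 0 <= a * t%:R by apply: mulr_ge0; [case/andP: a01 | rewrite ler0n].
apply/andP; split.
- apply: nostop_Ssum_gt hn => //.
  exact: le_trans (Pber_Ssum_le a01 t_gt0 x02) chernoff_le_spent.
- apply: nostop_Ssum_lt hn => //; first lra.
  exact: le_trans (Pber_Ssum_ge a01 t_gt0 x02) chernoff_le_spent.
Qed.

Lemma tail_given_le_above r : 0 <= r <= 1 -> a + 2 * x / t%:R <= r ->
  tail_given U L t r <= expR (- (x ^+ 2 / (8 * t%:R))).
Proof.
move=> r01 ar; have tp : (0 : R) < t%:R by rewrite ltr0n.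
have /andP[x1 xt] := x_range.
set y := r * t%:R - a * t%:R - x.
have xy : x <= y.
  have : 2 * x / t%:R * t%:R <= (r - a) * t%:R by rewrite ler_pM2r //; lra.
  by rewrite divfK ?gt_eqF // /y; lra.
have y2t : y <= 2 * t%:R.
  have : r * t%:R <= t%:R by rewrite ler_piMl //; case/andP: r01.
  have : 0 <= a * t%:R by apply: mulr_ge0; [case/andP: a01 | rewrite ler0n].
  rewrite /y; lra.
apply: le_trans (_ : Pber r (fun s : t.-tuple bool => (Ssum s t)%:~R <= r * t%:R - y) <= _).
  apply: le_Pber => // s /nostop_Ssum_band /andP[_ h]; rewrite /y; lra.
apply: le_trans (Pber_Ssum_le r01 t_gt0 _) _; first by apply/andP; split; lra.
rewrite ler_expR lerN2 ler_pM2r ?invr_gt0 ?mulr_gt0 //.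
by apply: lerXn2r; rewrite ?nnegrE; lra.
Qed.

Lemma tail_given_le_below r : 0 <= r <= 1 -> r <= a - 2 * x / t%:R ->
  tail_given U L t r <= expR (- (x ^+ 2 / (8 * t%:R))).
Proof.
move=> r01 ra; have tp : (0 : R) < t%:R by rewrite ltr0n.
have /andP[x1 xt] := x_range.
set y := a * t%:R - r * t%:R - x.
have xy : x <= y.
  have : 2 * x / t%:R * t%:R <= (a - r) * t%:R by rewrite ler_pM2r //; lra.
  by rewrite divfK ?gt_eqF // /y; lra.
have y2t : y <= 2 * t%:R.
  have : a * t%:R <= t%:R by rewrite ler_piMl //; case/andP: a01.
  have : 0 <= r * t%:R by apply: mulr_ge0; [case/andP: r01 | rewrite ler0n].
  rewrite /y; lra.
apply: le_trans (_ : Pber r (fun s : t.-tuple bool => r * t%:R + y <= (Ssum s t)%:~R) <= _).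
  apply: le_Pber => // s /nostop_Ssum_band /andP[h _]; rewrite /y; lra.
apply: le_trans (Pber_Ssum_ge r01 t_gt0 _) _; first by apply/andP; split; lra.
rewrite ler_expR lerN2 ler_pM2r ?invr_gt0 ?mulr_gt0 //.
by apply: lerXn2r; rewrite ?nnegrE; lra.
Qed.

Lemma tail_given_le_far r : 0 <= r <= 1 -> 2 * x / t%:R <= `|r - a| ->
  tail_given U L t r <= expR (- (x ^+ 2 / (8 * t%:R))).
Proof.
move=> r01; have [ar|ra] := leP a r.
  by rewrite ger0_norm ?subr_ge0 // => h; apply: tail_given_le_above; lra.
by rewrite ltr0_norm ?subr_lt0 // => h; apply: tail_given_le_below; lra.
Qed.

End Deviation.

End Boundaries.
Arguments tail_given_le_far {R a eps U L} Hb a01 eps0_ge0 {t x}.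

Section Mixture.
Context {R : realType}.
Variable mu : probability R R.
Hypothesis mu01 : mu `[0, 1]%classic = 1%E.
Local Open Scope classical_set_scope.

Let D : set R := `[0, 1].
Let mD : measurable D. Proof. exact: measurable_itv. Qed.
Let D01 r : D r -> 0 <= r <= 1. Proof. by rewrite /D /= in_itv. Qed.
Let muC : mu (~` D) = 0%E. Proof. by rewrite probability_setC // mu01 subee. Qed.

Lemma integral_itv01 (f : R -> R) : measurable_fun setT f ->
  (\int[mu]_(r in setT) (f r)%:E = \int[mu]_(r in D) (f r)%:E)%E.
Proof.
move=> mf; have mEf : measurable_fun setT (EFin \o f) by exact: measurableT_comp.
rewrite -(setUv D) integral_setU //; first last.
- exact/disj_setPCl.
- exact: measurable_funTS.
- exact: measurableC.
rewrite (@null_set_integral _ _ _ mu (~` D)) ?adde0 //.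
- exact: measurableC.
- exact: measurable_funTS.
Qed.

Section Bounded.
Variable f : R -> R.
Hypotheses (mf : measurable_fun setT f) (f01 : forall r, 0 <= r <= 1 -> 0 <= f r <= 1).

Lemma integral01_ge0 : (0 <= \int[mu]_(r in setT) (f r)%:E)%E.
Proof.
rewrite integral_itv01 //; apply: integral_ge0 => r /D01 /f01 /andP[f0 _].
by rewrite lee_fin.
Qed.

Lemma fine_integral01_le (N : set R) (e : R) : measurable N -> 0 <= e ->
  (forall r, 0 <= r <= 1 -> ~ N r -> f r <= e) ->
  fine (\int[mu]_(r in setT) (f r)%:E) <= fine (mu N) + e.
Proof.
move=> mN e0 fe.
have mI : measurable_fun D (fun r => (\1_N r)%:E + e%:E)%E.
  by apply/measurable_funTS/measurable_EFinP/measurable_funD => //; exact: measurable_indic.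
have : (\int[mu]_(r in setT) (f r)%:E <= \int[mu]_(r in D) ((\1_N r)%:E + e%:E))%E.
  rewrite integral_itv01 //; apply: ge0_le_integral => //.
  - by move=> r /D01 /f01 /andP[f0 _]; rewrite lee_fin.
  - exact/measurable_funTS/measurableT_comp.
  move=> r /D01 r01; rewrite -EFinD lee_fin indicE.
  have /andP[f0 f1] := f01 r r01.
  case: (boolP (r \in N)) => [_ | /negP rN] /=; first lra.
  by rewrite add0r; apply: fe => // Nr; apply: rN; rewrite in_setE.
rewrite ge0_integralD //; last by apply/measurable_EFinP; exact: measurable_indic.
rewrite integral_indic // integral_cst // [X in (_ * X)%E](_ : _ = 1%E); last exact: mu01.
rewrite mule1 => hI.
have hND : (mu (N `&` D) <= (fine (mu N))%:E)%E.
  by rewrite fineK ?fin_num_measure //; apply: le_measure; rewrite ?inE //; exact: measurableI.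
move: integral01_ge0 (le_trans hI (leeD2r _ hND)).
by case: (\int[mu]_(r in setT) (f r)%:E)%E => //= x; rewrite !lee_fin.
Qed.

End Bounded.

Lemma measure_oo_le_cdf {x y : R} : x <= y ->
  fine (mu `]x, y[) <= cdf_of mu y - cdf_of mu x.
Proof.
move=> xy.
have mA : measurable (`]-oo, x] : set R) by exact: measurable_itv.
have mB : measurable (`]x, y] : set R) by exact: measurable_itv.
have AB : `]-oo, x] `&` `]x, y] = set0 :> set R.
  apply/seteqP; split => z //=; rewrite !in_itv /= => -[h1 /andP[h2 _]].
  by move: (lt_le_trans h2 h1); rewrite ltxx.
have AUB : `]-oo, y] = `]-oo, x] `|` `]x, y] :> set R.
  by apply: itv_bndbnd_setU; rewrite bnd_simp.
rewrite /cdf_of AUB measureU // fineD ?fin_num_measure // addrAC subrr add0r.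
apply: fine_le; rewrite ?fin_num_measure //; try exact: measurable_itv.
by apply: le_measure; rewrite ?inE; try exact: measurable_itv; apply: subset_itvl; rewrite bnd_simp.
Qed.

End Mixture.
Arguments integral01_ge0 {R mu} mu01 {f}.
Arguments fine_integral01_le {R mu} mu01 {f}.

Section Eventually.
Context {R : realType}.
Local Open Scope classical_set_scope.

Lemma near_powRN_le {e eps : R} : 0 < e -> 0 < eps ->
  \forall t \near \oo, t%:R `^ (- e) <= eps.
Proof.
move=> e0 eps0; near=> t.
have tge : (eps^-1) `^ (e^-1) <= t%:R by near: t; exact: nbhs_infty_ger.
have tp : (0 : R) < t%:R by apply: lt_le_trans tge; rewrite powR_gt0 ?invr_gt0.
rewrite powRN -[eps]invrK lef_pV2 ?posrE ?invr_gt0 ?powR_gt0 //.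
have nn1 : (eps^-1) `^ (e^-1) \in Num.nneg by rewrite nnegrE powR_ge0.
have nn2 : (t%:R : R) \in Num.nneg by rewrite nnegrE ltW.
have := @ge0_ler_powR R e (ltW e0) _ _ nn1 nn2 tge.
by rewrite -powRrM mulVf ?gt_eqF // powRr1 // invr_ge0 ltW.
Unshelve. all: by end_near.
Qed.

(* expR y >= y^k / k! with k > (m + 1) / eta beats every power of t. *)
Lemma near_expR_le_powRN {eta m C : R} : 0 < eta -> 0 <= m -> 0 < C ->
  \forall t \near \oo, expR (- (t%:R `^ eta / 8)) <= C * t%:R `^ (- m).
Proof.
move=> eta0 m0 C0.
have [n hn] : exists n : nat, m + 1 <= eta * n.+1%:R.
  have hq : 0 <= (m + 1) / eta by rewrite divr_ge0 //; lra.
  exists (Num.Def.archi_bound ((m + 1) / eta)).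
  have := archi_boundP hq; rewrite -(ltr_pM2r eta0) divfK ?gt_eqF // => h.
  have : (Num.Def.archi_bound ((m + 1) / eta))%:R <= (Num.Def.archi_bound ((m + 1) / eta)).+1%:R :> R.
    by rewrite ler_nat.
  nra.
set k := n.+1.
set K : R := k`!%:R * 8 ^+ k.
have K0 : 0 < K by rewrite /K mulr_gt0 ?exprn_gt0 ?ltr0n ?fact_gt0.
near=> t.
have tK : K / C <= t%:R by near: t; exact: nbhs_infty_ger.
have tp : (0 : R) < t%:R by apply: lt_le_trans tK; rewrite divr_gt0.
set y := t%:R `^ eta / 8.
have yk : y ^+ k = t%:R `^ (eta * k%:R) / 8 ^+ k.
  by rewrite /y expr_div_n -powR_mulrn ?powR_ge0 // -powRrM.
have yk_gt0 : 0 < y ^+ k / k`!%:R.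
  by rewrite yk !divr_gt0 ?exprn_gt0 ?ltr0n ?fact_gt0 // powR_gt0.
have expR_ge : y ^+ k / k`!%:R <= expR y.
  apply: le_trans (expR_ge1Dxn n _); first by rewrite lerDr.
  by rewrite /y divr_ge0 ?powR_ge0.
have : expR (- y) <= K * t%:R `^ (- (eta * k%:R)).
  rewrite expRN; apply: le_trans (_ : (y ^+ k / k`!%:R)^-1 <= _).
    by rewrite lef_pV2 ?posrE ?expR_gt0.
  rewrite yk powRN /K !invfM !invrK le_eqVlt; apply/orP; left; apply/eqP; ring.
move/le_trans; apply.
have tm : t%:R `^ (- (eta * k%:R)) <= t%:R `^ (- m) * t%:R^-1.
  rewrite -(powR_inv1 (ltW tp)) -powRD; last by apply/implyP => _; rewrite gt_eqF.
  apply: ler_powR; first by rewrite ler1n; near: t; exact: nbhs_infty_ge.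
  by move: hn; rewrite /k; lra.
apply: le_trans (ler_wpM2l (ltW K0) tm) _.
rewrite mulrCA mulrC ler_wpM2r ?powR_ge0 //.
by rewrite ler_pdivrMr // mulrC -ler_pdivrMr.
Unshelve. all: by end_near.
Qed.

Lemma cvg0_near_le_powRN (u : nat -> R) (K e : R) : 0 < e ->
  (\forall t \near \oo, 0 <= u t <= K * t%:R `^ (- e)) -> u @ \oo --> 0.
Proof.
move=> e0 uK; apply/cvgrPdist_le => d d0; near=> t.
have /andP[u0 uKt] : 0 <= u t <= K * t%:R `^ (- e) by near: t.
have small : t%:R `^ (- e) <= d / (`|K| + 1).
  by near: t; apply: near_powRN_le; rewrite // divr_gt0 // ltr_wpDl.
rewrite sub0r normrN ger0_norm //; apply: le_trans uKt _.
apply: le_trans (ler_wpM2r (powR_ge0 _ _) (ler_norm K)) _.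
apply: le_trans (ler_wpM2l (normr_ge0 K) small) _.
rewrite mulrA ler_pdivrMr ?ltr_wpDl // mulrC ler_wpM2l ?(ltW d0) //.
by rewrite lerDl.
Unshelve. all: by end_near.
Qed.

Lemma cvg0_div_powR (u : nat -> R) (K xi d : R) : 0 < xi -> - (xi / 2) < d ->
  (forall t, 0 <= u t) ->
  (forall eta, 0 < eta < 1 ->
    \forall t \near \oo, u t <= K * t%:R `^ (xi * (eta - 1) / 2)) ->
  (fun t => u t / t%:R `^ d) @ \oo --> 0.
Proof.
move=> xi_gt0 hd u_ge0 near_le.
(* Choose eta < 1 + 2d/xi, so that t^(xi (eta-1)/2) = o(t^d). *)
set w := 1 + 2 * d / xi.
have w_gt0 : 0 < w.
  have : -1 < 2 * d / xi by rewrite ltr_pdivlMr //; lra.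
  by rewrite /w; lra.
have xiw : xi * w = xi + 2 * d by rewrite /w mulrDr mulr1 mulrC divfK ?gt_eqF.
set eta := Num.min (1 / 2) (w / 2).
have heta : 0 < eta < 1.
  by rewrite lt_min gt_min divr_gt0 //=; apply/andP; split; lra.
have eta_lt : xi * (eta - 1) / 2 < d.
  have : xi * eta < xi * w by rewrite ltr_pM2l // gt_min; apply/orP; right; lra.
  by rewrite xiw; lra.
apply: (@cvg0_near_le_powRN _ K (d - xi * (eta - 1) / 2)).
  by rewrite subr_gt0.
near=> t.
have tp : (0 : R) < t%:R by rewrite ltr0n; near: t; exact: nbhs_infty_gt.
have td : 0 < t%:R `^ d by rewrite powR_gt0.
rewrite divr_ge0 ?u_ge0 ?(ltW td) //=.
rewrite opprB powRD; last by apply/implyP => _; rewrite gt_eqF.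
rewrite powRN mulrA ler_wpM2r ?invr_ge0 ?powR_ge0 //.
by near: t; exact: near_le.
Unshelve. all: by end_near.
Qed.

End Eventually.

Section TailProbability.
Context {R : realType}.
Variables (alpha : R) (eps : nat -> R) (U L : nat -> int) (mu : probability R R).
Hypotheses (Hb : is_boundaries alpha eps U L) (alpha01 : 0 <= alpha <= 1)
  (eps0_ge0 : 0 <= eps 0%N) (mu01 : mu `[0, 1]%classic = 1%E).
Local Open Scope classical_set_scope.

Let tail_given_measurable t : measurable_fun setT (tail_given U L t : R -> R).
Proof. exact: measurable_Pber. Qed.

Let tail_given01 t (r : R) : 0 <= r <= 1 -> 0 <= tail_given U L t r <= 1.
Proof. by move=> r01; rewrite Pber_ge0 ?Pber_le1. Qed.

Lemma tail_prob_ge0 t : 0 <= tail_prob mu U L t.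
Proof. exact/fine_ge0/(integral01_ge0 mu01 (tail_given_measurable t) (tail_given01 t)). Qed.

Variables (a b c xi : R).
Hypothesis cdf_holder : forall y z : R, a < y < b -> a < z < b ->
  `|cdf_of mu y - cdf_of mu z| <= c * `|y - z| `^ xi.

(* Paths with p outside the window around alpha are caught with probability
   exp(-x^2/8t); the window itself has mass controlled by the Hoelder CDF. *)
Lemma tail_prob_le_window {t : nat} {x : R} : (0 < t)%N -> 1 <= x <= t%:R ->
  expR (- (x ^+ 2 / (8 * t%:R))) <= eps t - eps t.-1 ->
  a < alpha - 2 * x / t%:R -> alpha + 2 * x / t%:R < b ->
  tail_prob mu U L t <= c * (4 * x / t%:R) `^ xi + expR (- (x ^+ 2 / (8 * t%:R))).
Proof.
move=> t0 xr spent ha hb; have /andP[x1 xt] := xr.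
have tp : (0 : R) < t%:R by rewrite ltr0n.
set del := 2 * x / t%:R in ha hb *.
have del0 : 0 <= del by rewrite /del divr_ge0 //; lra.
have far r : 0 <= r <= 1 -> ~ `]alpha - del, alpha + del[ r ->
    tail_given U L t r <= expR (- (x ^+ 2 / (8 * t%:R))).
  move=> r01 rN; apply: (tail_given_le_far Hb alpha01 eps0_ge0 t0 xr spent r r01).
  by rewrite leNgt ltr_distl; apply/negP => rin; apply: rN; rewrite /= in_itv.
apply: le_trans (fine_integral01_le mu01 (tail_given_measurable t) (tail_given01 t)
  _ _ (measurable_itv _) (ltW (expR_gt0 _)) far) _.
rewrite lerD2r.
have del_le : alpha - del <= alpha + del by lra.
apply: le_trans (measure_oo_le_cdf mu del_le) _.
have in_ab : a < alpha + del < b /\ a < alpha - del < b by split; apply/andP; split; lra.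
apply: le_trans (ler_norm _) _; apply: le_trans (cdf_holder _ _ in_ab.1 in_ab.2) _.
rewrite (_ : alpha + del - (alpha - del) = 4 * x / t%:R); last by rewrite /del; field; lra.
by rewrite ger0_norm // divr_ge0 //; lra.
Qed.

Lemma tail_prob_le_powR {eta : R} {t : nat} : 0 < eta < 1 -> (0 < t)%N ->
  expR (- (t%:R `^ eta / 8)) <= eps t - eps t.-1 ->
  a < alpha - 2 * t%:R `^ ((eta - 1) / 2) -> alpha + 2 * t%:R `^ ((eta - 1) / 2) < b ->
  tail_prob mu U L t <=
  c * 4 `^ xi * t%:R `^ (xi * (eta - 1) / 2) + expR (- (t%:R `^ eta / 8)).
Proof.
move=> /andP[eta0 eta1] t0 spent ha hb.
have tp : (0 : R) < t%:R by rewrite ltr0n.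
have tN0 : t%:R != 0 :> R by rewrite gt_eqF.
have powRDt p p' : t%:R `^ (p + p') = t%:R `^ p * t%:R `^ p' :> R.
  by rewrite powRD // tN0 implybT.
set x := t%:R `^ ((1 + eta) / 2).
have x2 : x ^+ 2 / (8 * t%:R) = t%:R `^ eta / 8.
  rewrite /x -powR_mulrn ?powR_ge0 // -powRrM (_ : _ * 2%:R = 1 + eta); last by field.
  by rewrite powRDt powRr1 ?ltW //; field.
have x_scaled p : p * x / t%:R = p * t%:R `^ ((eta - 1) / 2).
  rewrite -mulrA; congr (_ * _); rewrite (_ : (eta - 1) / 2 = (1 + eta) / 2 + (-1)).
    by rewrite powRDt powR_inv1 // ltW.
  by field.
have x1 : 1 <= x.
  by rewrite /x -{1}(powRr0 t%:R); apply: ler_powR; rewrite ?ler1n //; lra.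
have xlet : x <= t%:R.
  by rewrite /x -{2}(powRr1 (ltW tp)); apply: ler_powR; rewrite ?ler1n //; lra.
rewrite -x2; apply: le_trans (tail_prob_le_window (x := x) t0 _ _ _ _) _.
- by rewrite x1 xlet.
- by rewrite x2.
- by rewrite x_scaled.
- by rewrite x_scaled.
rewrite x_scaled powRM ?powR_ge0 // -powRrM mulrA (_ : (eta - 1) / 2 * xi = xi * (eta - 1) / 2) //.
by rewrite mulrC mulrA.
Qed.

Variables (lam q : R) (T : nat).
Hypotheses (lam_gt0 : 0 < lam) (q_gt0 : 0 < q) (xi_gt0 : 0 < xi).
Hypothesis spending_rate : forall t : nat, (T <= t)%N -> lam * t%:R `^ (- q) <= eps t - eps t.-1.
Hypothesis alpha_in_ab : a < alpha < b.

Lemma tail_prob_near_le {eta : R} : 0 < eta < 1 ->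
  \forall t \near \oo,
    tail_prob mu U L t <= (c * 4 `^ xi + 1) * t%:R `^ (xi * (eta - 1) / 2).
Proof.
move=> /[dup] heta /andP[eta0 eta1].
have [aalpha alphab] : a < alpha /\ alpha < b by apply/andP.
set gap := Num.min (alpha - a) (b - alpha).
have gap_gt0 : 0 < gap by rewrite lt_min !subr_gt0 aalpha alphab.
have [gapa gapb] : gap <= alpha - a /\ gap <= b - alpha by split; rewrite ge_min lexx ?orbT.
have rate_ge0 : 0 <= xi * (1 - eta) / 2.
  by rewrite divr_ge0 // mulr_ge0 ?(ltW xi_gt0) //; lra.
near=> t.
have t0 : (0 < t)%N by near: t; exact: nbhs_infty_gt.
have spent : expR (- (t%:R `^ eta / 8)) <= eps t - eps t.-1.
  have rate : expR (- (t%:R `^ eta / 8)) <= lam * t%:R `^ (- q).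
    by near: t; exact: near_expR_le_powRN eta0 (ltW q_gt0) lam_gt0.
  by apply: le_trans rate (spending_rate _ _); near: t; exact: nbhs_infty_ge.
have small : t%:R `^ (- ((1 - eta) / 2)) <= gap / 4.
  by near: t; apply: near_powRN_le; rewrite divr_gt0 //; lra.
have tail : expR (- (t%:R `^ eta / 8)) <= 1 * t%:R `^ (- (xi * (1 - eta) / 2)).
  by near: t; exact: near_expR_le_powRN eta0 rate_ge0 ltr01.
rewrite (_ : - ((1 - eta) / 2) = (eta - 1) / 2) in small; last by field.
rewrite mul1r (_ : - (xi * (1 - eta) / 2) = xi * (eta - 1) / 2) in tail; last by field.
by apply: le_trans (tail_prob_le_powR heta t0 spent _ _) _; lra.
Unshelve. all: by end_near.
Qed.

End TailProbability.
Arguments tail_prob_near_le {R alpha eps U L mu} Hb alpha01 eps0_ge0 mu01 {a b c xi}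
  cdf_holder {lam q T} lam_gt0 q_gt0 xi_gt0 spending_rate alpha_in_ab {eta}.

Theorem lemma3 (R : realType) (alpha epsl : R) (eps : nat -> R)
  (U L : nat -> int) (lam q : R) (T : nat)
  (mu : probability R R) (xi : R) :
  0 < alpha < 1 ->
  0 < epsl <= 4^-1 ->
  0 <= eps 0%N -> (forall t, eps t <= eps t.+1) -> (eps @ \oo --> epsl)%classic ->
  is_boundaries alpha eps U L ->
  0 < lam -> 0 < q -> (0 < T)%N ->
  (forall t : nat, (T <= t)%N -> lam * (t%:R `^ (- q)) <= eps t - eps t.-1) ->
  (* p is [0,1]-valued with distribution mu *)
  mu `[0, 1]%classic = 1%E ->
  0 < xi ->
  (exists a b c : R, [/\ a < alpha < b, 0 < c &
     forall x y : R, a < x < b -> a < y < b ->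
       `|cdf_of mu x - cdf_of mu y| <= c * `|x - y| `^ xi]) ->
  (forall eta : R, 0 < eta < 1 ->
     exists (kappa : R) (Tt : nat), forall t : nat, (Tt <= t)%N ->
       tail_prob mu U L t <=
         2 * expR (- 2 * (t%:R `^ eta)) + kappa * t%:R `^ (xi * (eta - 1) / 2))
  /\
  (forall d : R, - (xi / 2) < d ->
     (fun t : nat => tail_prob mu U L t / t%:R `^ d) @ \oo --> (0 : R))%classic.
Proof.
(* Only eps_0 >= 0 and the increments of eps enter: its monotonicity and limit do not. *)
move=> /andP[alpha0 alpha1] _ eps0_ge0 _ _ Hb lam_gt0 q_gt0 _ rate mu01 xi_gt0.
move=> [a [b [c [alpha_ab _ holder]]]].
have alpha01 : 0 <= alpha <= 1 by rewrite !ltW.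
have near_le eta := tail_prob_near_le Hb alpha01 eps0_ge0 mu01 holder
  lam_gt0 q_gt0 xi_gt0 rate alpha_ab (eta := eta).
split=> [eta heta|].
  exists (c * 4 `^ xi + 1); have [Tt _ hTt] := near_le eta heta.
  exists Tt => t /hTt /= h; apply: le_trans h _.
  by rewrite lerDr mulr_ge0 ?expR_ge0.
by move=> d hd; exact: cvg0_div_powR xi_gt0 hd (tail_prob_ge0 U L _ mu01) near_le.
Qed.
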